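(* Let $s\ge 1$ and let $p\in F_{2,2s}$ be a product of $2s$ real linear forms, with $p\ne\pm\ell^{2s}$ for every real linear form $\ell$. If $(a,b)\in\mathcal B(p)$, then $a\ge s$ and $b\ge s$.
   Context: $F_{2,2s}$ is the real vector space of real binary forms of degree $2s$ in $x,y$. A representation of $p\in F_{2,2s}$ is an expression $p=\sum_{j=1}^r\lambda_j(\alpha_jx+\beta_jy)^{2s}$ with $r\ge 0$ (the empty sum being $0$), $\alpha_j,\beta_j\in\mathbb R$ and $0\ne\lambda_j\in\mathbb R$; it is honest if the linear forms $\alpha_jx+\beta_jy$ are pairwise non-proportional. Its badge is $(a,b)$, where $a$ (resp. $b$) is the number of indices $j$ with $\lambda_j>0$ (resp. $\lambda_j<0$). $\mathcal B(p)$ denotes the set of badges of all honest representations of $p$. *)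

(* real binary forms represented as polynomial functions R -> R -> R.
   Since R is infinite, equality of forms coincides with equality of the
   associated functions. *)
From Stdlib Require Import Reals List Arith.
Open Scope R_scope.

Definition linform (alpha beta x y : R) : R := alpha * x + beta * y.

Definition prod_lin (L : list (R * R)) (x y : R) : R :=
  fold_right (fun ab acc => linform (fst ab) (snd ab) x y * acc) 1 L.

Definition is_prod_of_linforms (n : nat) (p : R -> R -> R) : Prop :=
  exists L : list (R * R), length L = n /\ forall x y, p x y = prod_lin L x y.

Definition rep_eval (d : nat) (rep : list (R * R * R)) (x y : R) : R :=
  fold_right (fun t acc =>
     let '(lam, al, be) := t in lam * (linform al be x y) ^ d + acc) 0 rep.

Definition term_lam (t : R * R * R) : R := let '(lam, _, _) := t in lam.
Definition term_al (t : R * R * R) : R := let '(_, al, _) := t in al.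
Definition term_be (t : R * R * R) : R := let '(_, _, be) := t in be.

Definition is_rep (d : nat) (p : R -> R -> R) (rep : list (R * R * R)) : Prop :=
  (forall t, In t rep -> term_lam t <> 0) /\
  (forall x y, p x y = rep_eval d rep x y).

Definition honest (rep : list (R * R * R)) : Prop :=
  forall i j : nat, (i < j)%nat -> (j < length rep)%nat ->
    let ti := nth i rep (0, 0, 0) in
    let tj := nth j rep (0, 0, 0) in
    term_al ti * term_be tj - term_al tj * term_be ti <> 0.

Definition is_posb (t : R * R * R) : bool :=
  if Rlt_dec 0 (term_lam t) then true else false.
Definition is_negb (t : R * R * R) : bool :=
  if Rlt_dec (term_lam t) 0 then true else false.

Definition badge (rep : list (R * R * R)) : nat * nat :=
  (length (filter is_posb rep), length (filter is_negb rep)).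

Definition badges (d : nat) (p : R -> R -> R) (ab : nat * nat) : Prop :=
  exists rep, is_rep d p rep /\ honest rep /\ badge rep = ab.

(* Deriving p = sum lambda_j l_j^(2s) along a direction v multiplies the
   j-th term by 2s * l_j(v); deriving twice along the kernel of l_u kills the
   term u and multiplies every other term by a positive factor.  By Rolle's
   theorem, every derivative of a product of real linear forms is again such a
   product, hence has a nontrivial real zero.  So if fewer than s terms are
   positive, killing them leaves a negative semidefinite sum of even powers with
   a zero, forcing all surviving (pairwise independent) forms to share a zero:
   at most one negative term survives.  Symmetrically at most one positive term
   remains, and a last pair of derivatives turns the two remaining terms into a
   positive definite sum, which again has a zero: contradiction. *)

From Stdlib Require Import Reals List Arith Lra Lia Permutation Sorting.Sorted
  FunctionalExtensionality Classical.
Import ListNotations.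
Open Scope R_scope.

(** * Univariate polynomial functions of bounded degree *)

Fixpoint peval (l : list R) (t : R) : R :=
  match l with [] => 0 | a :: l' => a + t * peval l' t end.

Definition poly_le (m : nat) (f : R -> R) : Prop :=
  exists l, (length l <= S m)%nat /\ forall t, f t = peval l t.

Lemma poly_le_ext m f g : (forall t, f t = g t) -> poly_le m f -> poly_le m g.
Proof. intros E [l [Hl He]]. exists l. split; [auto|]. intro t. rewrite <- E. auto. Qed.

Lemma poly_le_mono m m' f : (m <= m')%nat -> poly_le m f -> poly_le m' f.
Proof. intros H [l [Hl He]]. exists l. split; [lia|auto]. Qed.

Lemma poly_le_const c : poly_le 0 (fun _ => c).
Proof. exists [c]. split; [simpl; lia|]. intro; simpl; ring. Qed.

Fixpoint padd (l1 l2 : list R) : list R :=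
  match l1, l2 with
  | [], _ => l2
  | _, [] => l1
  | a :: r1, b :: r2 => (a + b) :: padd r1 r2
  end.

Lemma padd_eval l1 l2 t : peval (padd l1 l2) t = peval l1 t + peval l2 t.
Proof.
  revert l2; induction l1 as [|a r IH]; intros [|b r2]; simpl; try ring.
  rewrite IH; ring.
Qed.

Lemma padd_length l1 l2 m :
  (length l1 <= m)%nat -> (length l2 <= m)%nat -> (length (padd l1 l2) <= m)%nat.
Proof.
  revert l2 m; induction l1 as [|a r IH]; intros [|b r2] m H1 H2; simpl in *; try lia.
  destruct m; [lia|]. specialize (IH r2 m). lia.
Qed.

Lemma poly_le_add m f g : poly_le m f -> poly_le m g -> poly_le m (fun t => f t + g t).
Proof.
  intros [l1 [H1 E1]] [l2 [H2 E2]]. exists (padd l1 l2). split.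
  - apply padd_length; auto.
  - intro t. rewrite padd_eval, E1, E2. reflexivity.
Qed.

Lemma poly_le_scal m c f : poly_le m f -> poly_le m (fun t => c * f t).
Proof.
  intros [l [H E]]. exists (map (fun a => c * a) l). split; [rewrite length_map; auto|].
  intro t. rewrite E. clear. induction l; simpl; [ring|]. rewrite <- IHl. ring.
Qed.

Lemma poly_le_mul_lin m a b f : poly_le m f -> poly_le (S m) (fun t => (a + b * t) * f t).
Proof.
  intros Hf. apply poly_le_ext with (fun t => a * f t + b * (t * f t)); [intro; ring|].
  apply poly_le_add.
  - apply poly_le_mono with m; [lia|]. apply poly_le_scal; auto.
  - apply poly_le_scal. destruct Hf as [l [H E]]. exists (0 :: l).
    split; [simpl; lia|]. intro t. simpl. rewrite E. ring.
Qed.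

Definition root_prod (tau : list R) (t : R) : R :=
  fold_right (fun z acc => (t - z) * acc) 1 tau.

Lemma poly_le_root_prod tau : poly_le (length tau) (root_prod tau).
Proof.
  induction tau as [|z tau IH].
  - apply poly_le_const.
  - apply poly_le_ext with (fun t => (- z + 1 * t) * root_prod tau t); [intro; simpl; ring|].
    apply poly_le_mul_lin; auto.
Qed.

Lemma root_prod_nonzero tau t : (forall z, In z tau -> t <> z) -> root_prod tau t <> 0.
Proof.
  induction tau as [|z tau IH]; intros H; simpl; [lra|].
  apply Rmult_integral_contrapositive_currified.
  - specialize (H z (or_introl eq_refl)). lra.
  - apply IH. intros; apply H; right; auto.
Qed.

Fixpoint quot (r : R) (l : list R) : list R :=
  match l with
  | [] => []
  | a :: l' => match l' with [] => [] | _ => peval l' r :: quot r l' end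
  end.

Lemma quot_eval r l t : peval l t = peval l r + (t - r) * peval (quot r l) t.
Proof.
  induction l as [|a l IH]; simpl; [ring|].
  destruct l as [|b l']; simpl; [ring|]. simpl in IH. rewrite IH at 1. ring.
Qed.

Lemma quot_length r l : length (quot r l) = pred (length l).
Proof. induction l as [|a l IH]; simpl; auto. destruct l; simpl in *; auto. Qed.

Lemma poly_le_factor m f r :
  poly_le (S m) f -> f r = 0 -> exists g, poly_le m g /\ forall t, f t = (t - r) * g t.
Proof.
  intros [l [Hl E]] Hr. exists (peval (quot r l)). split.
  - exists (quot r l). split; auto. rewrite quot_length. lia.
  - intro t. rewrite E, (quot_eval r l t), <- E, Hr. ring.
Qed.

Lemma poly_le0_const f : poly_le 0 f -> forall t, f t = f 0.
Proof.
  intros [l [Hl E]] t. rewrite !E. destruct l as [|a [|b l]]; simpl in *; try lia; ring.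
Qed.

Lemma poly_le_vanishing tau m f :
  length tau = m -> NoDup tau -> poly_le m f -> (forall z, In z tau -> f z = 0) ->
  exists c, forall t, f t = c * root_prod tau t.
Proof.
  revert m f; induction tau as [|z tau IH]; intros m f Hl Hn Hp Hz; simpl in Hl; subst m.
  - exists (f 0). intro t. simpl. rewrite (poly_le0_const f Hp t). ring.
  - destruct (poly_le_factor _ _ z Hp (Hz z (or_introl eq_refl))) as [g [Hg Eg]].
    inversion Hn as [|? ? Hnz Hntau]; subst.
    destruct (IH (length tau) g eq_refl Hntau Hg) as [c Ec].
    + intros z' Hz'. assert (Hz'0 : (z' - z) * g z' = 0) by (rewrite <- Eg; apply Hz; right; auto).
      apply Rmult_integral in Hz'0. destruct Hz'0 as [E|E]; auto.
      exfalso. apply Hnz. replace z with z' by lra. auto.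
    + exists c. intro t. rewrite Eg, Ec. simpl. ring.
Qed.

Lemma poly_le_zero_at_0 m f : poly_le m f -> (forall s, s <> 0 -> f s = 0) -> f 0 = 0.
Proof.
  intros Hp Hz.
  set (tau := map (fun k => INR (S k)) (seq 0 m)).
  assert (Hl : length tau = m) by (unfold tau; rewrite length_map, length_seq; auto).
  assert (Hn : NoDup tau).
  { apply FinFun.Injective_map_NoDup; [|apply seq_NoDup].
    intros x y E. apply INR_eq in E. lia. }
  destruct (poly_le_vanishing tau m f Hl Hn Hp) as [c Ec].
  { intros z Hz'. apply Hz. apply in_map_iff in Hz'. destruct Hz' as [k [<- _]].
    apply not_0_INR. lia. }
  assert (Hc : c = 0).
  { assert (Hnz : root_prod tau (INR (S m)) <> 0).
    { apply root_prod_nonzero. intros z Hz'. apply in_map_iff in Hz'.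
      destruct Hz' as [k [<- Hk]]. apply in_seq in Hk. intro E. apply INR_eq in E. lia. }
    specialize (Ec (INR (S m))). rewrite Hz in Ec by (apply not_0_INR; lia).
    symmetry in Ec. apply Rmult_integral in Ec. destruct Ec; [auto|contradiction]. }
  rewrite Ec, Hc. ring.
Qed.

Lemma poly_le_continuous m f : poly_le m f -> continuity f.
Proof.
  intros [l [_ E]]. replace f with (peval l) by (apply functional_extensionality; auto).
  clear. induction l as [|a l IH].
  - exact (continuity_const (fun _ => 0) (fun _ _ => eq_refl)).
  - change (continuity (plus_fct (fct_cte a) (mult_fct id (peval l)))).
    apply continuity_plus; [apply continuity_const; intros ? ?; reflexivity|].
    apply continuity_mult; auto. apply derivable_continuous, derivable_id.
Qed.

(** * Rolle's theorem for real-rooted polynomials, in weighted form *)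

(* A list [L] of pairs (root, weight) encodes [wprod L = prod (t - r_i)] and
   [wsum L = sum_i w_i prod_(j <> i) (t - r_j)]; with unit weights [wsum L]
   is the derivative of [wprod L]. *)
Definition wprod (L : list (R * R)) (t : R) : R := root_prod (map fst L) t.

Fixpoint wsum (L : list (R * R)) (t : R) : R :=
  match L with [] => 0 | p :: L' => snd p * wprod L' t + (t - fst p) * wsum L' t end.

Lemma wprod_cons p L t : wprod (p :: L) t = (t - fst p) * wprod L t.
Proof. reflexivity. Qed.

Lemma wsum_cons p L t : wsum (p :: L) t = snd p * wprod L t + (t - fst p) * wsum L t.
Proof. reflexivity. Qed.

Lemma poly_le_wsum L : poly_le (pred (length L)) (wsum L).
Proof.
  induction L as [|p L IH]; [apply poly_le_const|].
  destruct L as [|q L].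
  - apply poly_le_ext with (fun _ => snd p); [intro; simpl; unfold wprod; simpl; ring|].
    apply poly_le_const.
  - apply poly_le_ext with
      (fun t => snd p * wprod (q :: L) t + (- fst p + 1 * t) * wsum (q :: L) t).
    { intro t. rewrite (wsum_cons p). ring. }
    apply poly_le_add.
    + apply poly_le_scal. pose proof (poly_le_root_prod (map fst (q :: L))) as H.
      rewrite length_map in H. exact H.
    + apply poly_le_mul_lin. exact IH.
Qed.

Lemma wsum_perm L M : Permutation L M -> forall t, wprod L t = wprod M t /\ wsum L t = wsum M t.
Proof.
  induction 1; intro t; simpl.
  - auto.
  - destruct (IHPermutation t) as [A B]. rewrite !wprod_cons, A, B. auto.
  - rewrite !wprod_cons. split; ring.
  - destruct (IHPermutation1 t), (IHPermutation2 t). split; congruence.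
Qed.

Lemma wsum_merge r w1 w2 L t :
  wsum ((r, w1) :: (r, w2) :: L) t = (t - r) * wsum ((r, w1 + w2) :: L) t.
Proof. simpl. rewrite !wprod_cons. simpl. ring. Qed.

Fixpoint count_above (x : R) (l : list R) : nat :=
  match l with
  | [] => O
  | z :: l' => if Rlt_dec x z then S (count_above x l') else count_above x l'
  end.

Lemma root_prod_sign x l : ~ In x l -> 0 < root_prod l x * (-1) ^ (count_above x l).
Proof.
  induction l as [|z l IH]; intro H; simpl; [lra|].
  assert (x <> z) by (intro; apply H; left; auto).
  assert (H1 : 0 < root_prod l x * (-1) ^ count_above x l)
    by (apply IH; intro; apply H; right; auto).
  destruct (Rlt_dec x z); simpl.
  - replace ((x - z) * root_prod l x * (-1 * (-1) ^ count_above x l))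
      with ((z - x) * (root_prod l x * (-1) ^ count_above x l)) by ring.
    apply Rmult_lt_0_compat; lra.
  - replace ((x - z) * root_prod l x * (-1) ^ count_above x l)
      with ((x - z) * (root_prod l x * (-1) ^ count_above x l)) by ring.
    apply Rmult_lt_0_compat; lra.
Qed.

Lemma root_prod_root x l : In x l -> root_prod l x = 0.
Proof.
  induction l as [|z l IH]; intros H; [destruct H|]. simpl.
  destruct H as [<-|H]; [ring|]. rewrite IH; auto. ring.
Qed.

(* With distinct roots and positive weights, the sign of [wsum L] at a root [x]
   is [(-1)^(#roots above x)]: only the term omitting [x] survives there. *)
Lemma wsum_sign_at_root L x :
  NoDup (map fst L) -> (forall p, In p L -> 0 < snd p) -> In x (map fst L) ->
  0 < wsum L x * (-1) ^ (count_above x (map fst L)).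
Proof.
  induction L as [|p L IH]; intros Hn Hw Hx; [destruct Hx|].
  simpl in *. inversion Hn as [|? ? Hnp Hn']; subst. unfold wprod.
  set (e := (-1) ^ count_above x (map fst L)).
  destruct (Req_dec x (fst p)) as [E|E].
  - subst x. destruct (Rlt_dec (fst p) (fst p)); [lra|]. fold e.
    pose proof (root_prod_sign (fst p) (map fst L) Hnp).
    replace ((snd p * root_prod (map fst L) (fst p) + (fst p - fst p) * wsum L (fst p)) * e)
      with (snd p * (root_prod (map fst L) (fst p) * e)) by ring.
    apply Rmult_lt_0_compat; [apply Hw; left|]; auto.
  - destruct Hx as [Hx|Hx]; [congruence|].
    rewrite (root_prod_root x _ Hx).
    assert (H1 : 0 < wsum L x * e) by (apply IH; auto).
    destruct (Rlt_dec x (fst p)); simpl; fold e.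
    + replace ((snd p * 0 + (x - fst p) * wsum L x) * (-1 * e))
        with ((fst p - x) * (wsum L x * e)) by ring.
      apply Rmult_lt_0_compat; lra.
    + replace ((snd p * 0 + (x - fst p) * wsum L x) * e)
        with ((x - fst p) * (wsum L x * e)) by ring.
      apply Rmult_lt_0_compat; lra.
Qed.

Definition root_lt (p q : R * R) : Prop := fst p < fst q.

Lemma sorted_insert (p : R * R) M :
  StronglySorted root_lt M -> ~ In (fst p) (map fst M) ->
  exists M2, Permutation (p :: M) M2 /\ StronglySorted root_lt M2.
Proof.
  induction M as [|q M IH]; intros Hs Hn.
  - exists [p]. split; auto. repeat constructor.
  - inversion Hs as [|? ? HsM Hq]; subst. simpl in Hn.
    assert (fst p <> fst q) by (intro; apply Hn; left; auto).
    destruct (Rlt_dec (fst p) (fst q)).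
    + exists (p :: q :: M). split; auto. constructor; auto. constructor; auto.
      rewrite Forall_forall in Hq |- *. intros x Hx. unfold root_lt in *.
      specialize (Hq x Hx). lra.
    + destruct (IH HsM) as [M3 [P3 S3]]; [intro; apply Hn; right; auto|].
      exists (q :: M3). split.
      * eapply perm_trans; [apply perm_swap|]. constructor; auto.
      * constructor; auto. rewrite Forall_forall in Hq |- *. intros x Hx.
        apply (Permutation_in _ (Permutation_sym P3)) in Hx.
        destruct Hx as [<-|Hx]; [unfold root_lt; lra|auto].
Qed.

Lemma sorted_exists L : NoDup (map fst L) ->
  exists M, Permutation L M /\ StronglySorted root_lt M.
Proof.
  induction L as [|p L IH]; intro Hn; [exists []; split; auto; constructor|].
  inversion Hn as [|? ? Hp HnL]; subst. destruct (IH HnL) as [M [PM SM]].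
  destruct (sorted_insert p M SM) as [M2 [P2 S2]].
  - intro Hin. apply Hp. apply (Permutation_in _ (Permutation_sym (Permutation_map fst PM))). auto.
  - exists M2. split; auto. eapply perm_trans; [constructor; eauto|auto].
Qed.

Lemma sorted_roots M : StronglySorted root_lt M -> StronglySorted Rlt (map fst M).
Proof. induction 1; simpl; constructor; auto. apply Forall_map. auto. Qed.

Lemma count_above_all x l : Forall (Rlt x) l -> count_above x l = length l.
Proof. induction 1; simpl; auto. destruct (Rlt_dec x x0); [auto|contradiction]. Qed.

Lemma count_above_consecutive l1 a b l2 : StronglySorted Rlt (l1 ++ a :: b :: l2) ->
  count_above a (l1 ++ a :: b :: l2) = S (count_above b (l1 ++ a :: b :: l2)).
Proof.
  induction l1 as [|z l1 IH]; intro Hs; simpl in *.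
  - inversion Hs as [|? ? Hs1 Ha]; subst. inversion Hs1 as [|? ? Hs2 Hb]; subst.
    inversion Ha as [|? ? Hab Ha2]; subst.
    destruct (Rlt_dec a a); [lra|]. destruct (Rlt_dec a b); [|contradiction].
    destruct (Rlt_dec b a); [lra|]. destruct (Rlt_dec b b); [lra|].
    rewrite !count_above_all; auto.
  - inversion Hs as [|? ? Hs1 Hz]; subst. rewrite Forall_forall in Hz.
    assert (z < a) by (apply Hz; apply in_or_app; right; left; auto).
    assert (z < b) by (apply Hz; apply in_or_app; right; right; left; auto).
    destruct (Rlt_dec a z); [lra|]. destruct (Rlt_dec b z); [lra|]. auto.
Qed.

Definition alternates (f : R -> R) (l : list R) : Prop :=
  forall l1 a b l2, l = l1 ++ a :: b :: l2 -> f a * f b < 0.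

Lemma ivt_chain f : continuity f -> forall l, StronglySorted Rlt l -> alternates f l ->
  exists tau, length tau = pred (length l) /\ NoDup tau /\ (forall z, In z tau -> f z = 0) /\
    (forall a l', l = a :: l' -> forall z, In z tau -> a < z).
Proof.
  intros Hc. induction l as [|a l IH]; intros Hs Ha.
  - exists []. repeat split; simpl; auto; [constructor|intros ? []|intros ? ? ? ? []].
  - destruct l as [|b rest].
    + exists []. repeat split; simpl; auto; [constructor|intros ? []|intros ? ? ? ? []].
    + inversion Hs as [|? ? Hs1 Ha1]; subst. inversion Ha1 as [|? ? Hab _]; subst.
      assert (Hfab : f a * f b < 0) by (apply (Ha [] a b rest); auto).
      destruct (IVT_cor f a b Hc (Rlt_le _ _ Hab) (Rlt_le _ _ Hfab)) as [z [[Hz1 Hz2] Hz]].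
      assert (z <> a) by (intro; subst; rewrite Hz in Hfab; lra).
      assert (z <> b) by (intro; subst; rewrite Hz in Hfab; lra).
      destruct (IH Hs1) as [tau [L1 [N1 [Z1 Above]]]].
      { intros l1 a' b' l2 E. apply (Ha (a :: l1) a' b' l2). rewrite E. auto. }
      specialize (Above b rest eq_refl).
      exists (z :: tau). split; [simpl in *; lia|]. split.
      { constructor; auto. intro Hin. specialize (Above z Hin). lra. }
      split; [intros z' [<-|Hz']; auto|].
      intros a' l' E z' Hz'. injection E; intros; subst a'.
      destruct Hz' as [<-|Hz']; [lra|]. specialize (Above z' Hz'). lra.
Qed.

Lemma sign_square n : (-1) ^ n * (-1) ^ n = 1.
Proof. rewrite <- Rpow_mult_distr. replace (-1 * -1) with 1 by ring. apply pow1. Qed.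

(* Rolle for distinct roots: [wsum L] has a root strictly between any two
   consecutive roots of [wprod L], hence factors completely. *)
Lemma wsum_real_rooted_distinct L :
  NoDup (map fst L) -> (forall p, In p L -> 0 < snd p) ->
  exists c tau, length tau = pred (length L) /\ forall t, wsum L t = c * root_prod tau t.
Proof.
  intros Hn Hw. destruct (sorted_exists L Hn) as [M [PM SM]].
  assert (HnM : NoDup (map fst M))
    by (eapply Permutation_NoDup; [apply Permutation_map; eauto|auto]).
  assert (HwM : forall p, In p M -> 0 < snd p)
    by (intros p Hp; apply Hw; apply (Permutation_in _ (Permutation_sym PM)); auto).
  pose proof (sorted_roots M SM) as Sroots.
  destruct (ivt_chain (wsum M) (poly_le_continuous _ _ (poly_le_wsum M)) (map fst M) Sroots)
    as [tau [Lt [Nt [Zt _]]]].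
  { intros l1 a b l2 E.
    assert (Ha : In a (map fst M)) by (rewrite E; apply in_or_app; right; left; auto).
    assert (Hb : In b (map fst M)) by (rewrite E; apply in_or_app; right; right; left; auto).
    pose proof (wsum_sign_at_root M a HnM HwM Ha) as Sa.
    pose proof (wsum_sign_at_root M b HnM HwM Hb) as Sb.
    rewrite E in Sroots. pose proof (count_above_consecutive _ _ _ _ Sroots) as C.
    rewrite <- E in C. rewrite C in Sa. simpl in Sa.
    pose proof (sign_square (count_above b (map fst M))) as Sq.
    set (e := (-1) ^ count_above b (map fst M)) in *.
    assert (Hprod : 0 < (wsum M a * (-1 * e)) * (wsum M b * e)) by (apply Rmult_lt_0_compat; auto).
    replace (wsum M a * (-1 * e) * (wsum M b * e)) with (- (wsum M a * wsum M b) * (e * e)) in Hprod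
      by ring.
    rewrite Sq in Hprod. lra. }
  rewrite length_map in Lt.
  destruct (poly_le_vanishing tau _ (wsum M) Lt Nt (poly_le_wsum M) Zt) as [c Ec].
  exists c, tau. split.
  - rewrite Lt. apply Permutation_length in PM. auto.
  - intro t. destruct (wsum_perm L M PM t) as [_ ->]. auto.
Qed.

Lemma not_nodup_pair (L : list (R * R)) : ~ NoDup (map fst L) ->
  exists p q L', Permutation L (p :: q :: L') /\ fst p = fst q.
Proof.
  induction L as [|x L IH]; intro H; [exfalso; apply H; constructor|].
  simpl in H. destruct (classic (In (fst x) (map fst L))) as [Hi|Hi].
  - apply in_map_iff in Hi. destruct Hi as [q [Eq Hq]]. apply in_split in Hq.
    destruct Hq as [l1 [l2 ->]].
    exists x, q, (l1 ++ l2). split; auto. constructor. apply Permutation_sym, Permutation_middle.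
  - destruct IH as [p [q [L' [P E]]]]; [intro; apply H; constructor; auto|].
    exists p, q, (x :: L'). split; auto. eapply perm_trans; [constructor; exact P|].
    eapply perm_trans; [apply perm_swap|]. constructor. apply perm_swap.
Qed.

Lemma wsum_real_rooted L : L <> [] -> (forall p, In p L -> 0 < snd p) ->
  exists c tau, length tau = pred (length L) /\ forall t, wsum L t = c * root_prod tau t.
Proof.
  remember (length L) as n eqn:Hl. revert L Hl.
  induction n as [n IH] using lt_wf_ind. intros L Hl Hne Hw.
  destruct (classic (NoDup (map fst L))) as [Hn|Hn].
  - subst. apply wsum_real_rooted_distinct; auto.
  - destruct (not_nodup_pair L Hn) as [[r w1] [[r' w2] [L' [P E]]]]. simpl in E. subst r'.
    assert (Hl2 : length L = S (S (length L'))) by (apply Permutation_length in P; auto).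
    assert (Hin : forall p, In p ((r, w1) :: (r, w2) :: L') -> 0 < snd p)
      by (intros p Hp; apply Hw; apply (Permutation_in _ (Permutation_sym P)); auto).
    assert (Hw1 : 0 < w1) by (apply (Hin (r, w1)); left; auto).
    assert (Hw2 : 0 < w2) by (apply (Hin (r, w2)); right; left; auto).
    destruct (IH (S (length L')) ltac:(lia) ((r, w1 + w2) :: L') eq_refl ltac:(discriminate))
      as [c [tau [Lt Et]]].
    { intros p [<-|Hp]; [simpl; lra|]. apply Hin. right; right; auto. }
    exists c, (r :: tau). split; [simpl; lia|].
    intro t. destruct (wsum_perm _ _ P t) as [_ ->]. rewrite wsum_merge, Et. simpl. ring.
Qed.

(** * Directional derivatives of products of linear forms *)

(* Value at [v] of the linear form with coefficients [f]; it is also the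
   derivative of that form in direction [v]. *)
Definition lin_at (f v : R * R) : R := fst f * fst v + snd f * snd v.

Fixpoint prod_lin_deriv (v : R * R) (L : list (R * R)) (x y : R) : R :=
  match L with
  | [] => 0
  | f :: L' => lin_at f v * prod_lin L' x y + linform (fst f) (snd f) x y * prod_lin_deriv v L' x y
  end.

Lemma prod_lin_cons f L x y : prod_lin (f :: L) x y = linform (fst f) (snd f) x y * prod_lin L x y.
Proof. reflexivity. Qed.

Lemma prod_lin_deriv_cons v f L x y : prod_lin_deriv v (f :: L) x y =
  lin_at f v * prod_lin L x y + linform (fst f) (snd f) x y * prod_lin_deriv v L x y.
Proof. reflexivity. Qed.

Lemma prod_lin_deriv_perm v L M : Permutation L M ->
  forall x y, prod_lin L x y = prod_lin M x y /\ prod_lin_deriv v L x y = prod_lin_deriv v M x y.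
Proof.
  induction 1; intros x0 y0.
  - auto.
  - destruct (IHPermutation x0 y0) as [A B].
    rewrite !prod_lin_cons, !prod_lin_deriv_cons, A, B. auto.
  - rewrite !prod_lin_deriv_cons, !prod_lin_cons. split; ring.
  - destruct (IHPermutation1 x0 y0), (IHPermutation2 x0 y0). split; congruence.
Qed.

Lemma poly_le_prod_lin_line L x y a b :
  poly_le (length L) (fun s => prod_lin L (x + s * a) (y + s * b)).
Proof.
  induction L as [|f L IH]; [exact (poly_le_const 1)|].
  apply poly_le_ext with (fun s => ((fst f * x + snd f * y) + (fst f * a + snd f * b) * s)
                                   * prod_lin L (x + s * a) (y + s * b)).
  - intro; rewrite prod_lin_cons; unfold linform; ring.
  - apply poly_le_mul_lin. auto.
Qed.

Lemma poly_le_prod_lin_deriv_line v L x y a b :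
  poly_le (length L) (fun s => prod_lin_deriv v L (x + s * a) (y + s * b)).
Proof.
  induction L as [|f L IH]; [exact (poly_le_const 0)|].
  apply poly_le_ext with (fun s => lin_at f v * prod_lin L (x + s * a) (y + s * b) +
    ((fst f * x + snd f * y) + (fst f * a + snd f * b) * s) * prod_lin_deriv v L (x + s * a) (y + s * b)).
  { intro; rewrite prod_lin_deriv_cons; unfold linform; ring. }
  apply poly_le_add.
  - apply poly_le_mono with (length L); [simpl; lia|]. apply poly_le_scal, poly_le_prod_lin_line.
  - apply poly_le_mul_lin. auto.
Qed.

(* Dehomogenization along a fixed direction [v <> 0]: in the coordinates
   [along v] (parallel to v) and [across v] (orthogonal to v), a form [f] with
   [lin_at f v <> 0] reads [lin_at f v * (along - across * slope f)], so
   products of such forms become univariate products in [along]. *)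
Section Dehomogenize.
Variable v : R * R.
Hypothesis v_nonzero : fst v * fst v + snd v * snd v <> 0.

Definition along (x y : R) : R := (x * fst v + y * snd v) / (fst v * fst v + snd v * snd v).
Definition across (x y : R) : R := (y * fst v - x * snd v) / (fst v * fst v + snd v * snd v).
Definition slope (f : R * R) : R := (fst f * snd v - snd f * fst v) / lin_at f v.

Definition slope_roots (L : list (R * R)) : list (R * R) := map (fun f => (slope f, 1)) L.
Definition lead_const (L : list (R * R)) : R := fold_right (fun f acc => lin_at f v * acc) 1 L.

Definition scale_roots (u : R) (L : list (R * R)) : list (R * R) :=
  map (fun p => (u * fst p, snd p)) L.

Lemma linform_dehomogenize f x y : lin_at f v <> 0 ->
  linform (fst f) (snd f) x y = lin_at f v * (along x y - across x y * slope f).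
Proof. intros H. unfold linform, along, across, slope, lin_at in *. field. auto. Qed.

Lemma prod_lin_dehomogenize L x y : (forall f, In f L -> lin_at f v <> 0) ->
  prod_lin L x y = lead_const L * wprod (scale_roots (across x y) (slope_roots L)) (along x y).
Proof.
  intros H. induction L as [|f L IH]; [unfold wprod; simpl; ring|].
  rewrite prod_lin_cons, IH by (intros; apply H; right; auto).
  rewrite linform_dehomogenize by (apply H; left; auto). simpl. rewrite wprod_cons. simpl. ring.
Qed.

Lemma prod_lin_deriv_dehomogenize L x y : (forall f, In f L -> lin_at f v <> 0) ->
  prod_lin_deriv v L x y = lead_const L * wsum (scale_roots (across x y) (slope_roots L)) (along x y).
Proof.
  intros H. induction L as [|f L IH]; simpl; [ring|].
  rewrite IH by (intros; apply H; right; auto).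
  rewrite prod_lin_dehomogenize by (intros; apply H; right; auto).
  rewrite linform_dehomogenize by (apply H; left; auto). simpl. ring.
Qed.

(* Rehomogenization of a univariate product with roots [tau]. *)
Definition forms_of_roots (tau : list R) : list (R * R) :=
  map (fun r => ((fst v + r * snd v) / (fst v * fst v + snd v * snd v),
                 (snd v - r * fst v) / (fst v * fst v + snd v * snd v))) tau.

Lemma forms_of_roots_eval tau x y :
  root_prod (map (fun z => across x y * z) tau) (along x y) = prod_lin (forms_of_roots tau) x y.
Proof.
  induction tau as [|r tau IH]; [reflexivity|].
  simpl. rewrite IH. unfold linform, along, across. simpl. field. auto.
Qed.

End Dehomogenize.

Lemma root_prod_scale u tau t : u <> 0 ->
  root_prod (map (fun z => u * z) tau) t = u ^ (length tau) * root_prod tau (t / u).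
Proof. intro Hu. induction tau as [|z tau IH]; simpl; [ring|]. rewrite IH. field. auto. Qed.

Lemma wsum_scale u L t : u <> 0 ->
  wsum (scale_roots u L) t = u ^ (pred (length L)) * wsum L (t / u).
Proof.
  intro Hu. induction L as [|p L IH]; simpl; [ring|].
  fold (scale_roots u L). rewrite IH. unfold wprod, scale_roots. rewrite map_map. simpl.
  replace (map (fun x => u * fst x) L) with (map (fun z => u * z) (map fst L))
    by (rewrite map_map; auto).
  rewrite root_prod_scale, length_map by auto.
  destruct L as [|q L]; simpl; [ring|]. field. auto.
Qed.

(* Two functions whose difference is polynomial on every line orthogonal to
   [v], and which agree off the line [across v = 0], agree everywhere
   (each such line meets [across v = 0] in a single point). *)
Lemma agree_off_axis v m (F G : R -> R -> R) :
  fst v * fst v + snd v * snd v <> 0 ->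
  (forall x y, poly_le m (fun s =>
     F (x + s * - snd v) (y + s * fst v) - G (x + s * - snd v) (y + s * fst v))) ->
  (forall x y, across v x y <> 0 -> F x y = G x y) ->
  forall x y, F x y = G x y.
Proof.
  intros Hv Hpoly Hoff x y.
  destruct (Req_dec (across v x y) 0) as [Hu|Hu]; [|auto].
  assert (H0 := poly_le_zero_at_0 _ _ (Hpoly x y)). cbv beta in H0.
  rewrite !Rmult_0_l, !Rplus_0_r in H0. apply Rminus_diag_uniq, H0.
  intros s Hs. apply Rminus_diag_eq, Hoff.
  replace (across v (x + s * - snd v) (y + s * fst v)) with (across v x y + s)
    by (unfold across; field; auto).
  rewrite Hu. lra.
Qed.

Lemma prod_lin_deriv_factors_transverse v L : L <> [] -> (forall f, In f L -> lin_at f v <> 0) ->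
  exists K L', length L' = pred (length L) /\
    forall x y, prod_lin_deriv v L x y = K * prod_lin L' x y.
Proof.
  intros Hne H.
  assert (Hv : fst v * fst v + snd v * snd v <> 0).
  { destruct L as [|f L]; [congruence|]. specialize (H f (or_introl eq_refl)).
    unfold lin_at in H. intro E. apply H.
    assert (fst v = 0) by nra. assert (snd v = 0) by nra.
    repeat match goal with E : _ = 0 |- _ => rewrite E end. ring. }
  destruct (wsum_real_rooted (slope_roots v L)) as [c [tau [Lt Et]]].
  - destruct L; [congruence|discriminate].
  - intros p Hp. apply in_map_iff in Hp. destruct Hp as [f [<- _]]. simpl; lra.
  - unfold slope_roots in Lt. rewrite length_map in Lt.
    exists (lead_const v L * c), (forms_of_roots v tau).
    split; [unfold forms_of_roots; rewrite length_map; auto|].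
    apply (agree_off_axis v (length L)); auto.
    + intros x y. apply poly_le_add; [apply poly_le_prod_lin_deriv_line|].
      apply poly_le_ext with (fun s => - (lead_const v L * c) *
          prod_lin (forms_of_roots v tau) (x + s * - snd v) (y + s * fst v)); [intro; ring|].
      apply poly_le_scal. apply poly_le_mono with (length (forms_of_roots v tau));
        [unfold forms_of_roots; rewrite length_map; lia|apply poly_le_prod_lin_line].
    + intros x y Hu.
      rewrite prod_lin_deriv_dehomogenize, wsum_scale, Et, <- forms_of_roots_eval,
        root_prod_scale by auto.
      unfold slope_roots. rewrite length_map, Lt. ring.
Qed.

(* Factors constant along [v] are pulled out; the rest is the transverse case. *)
Lemma prod_lin_deriv_factors v L : L <> [] ->
  exists K L', length L' = pred (length L) /\
    forall x y, prod_lin_deriv v L x y = K * prod_lin L' x y.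
Proof.
  remember (length L) as n eqn:Hl. revert L Hl.
  induction n as [n IH] using lt_wf_ind. intros L Hl Hne.
  destruct (classic (exists f, In f L /\ lin_at f v = 0)) as [[f [Hf E]]|Hno].
  - apply in_split in Hf. destruct Hf as [l1 [l2 ->]].
    assert (P : Permutation (l1 ++ f :: l2) (f :: l1 ++ l2))
      by (apply Permutation_sym, Permutation_middle).
    assert (Hl0 : length (l1 ++ l2) = pred n) by (apply Permutation_length in P; simpl in P; lia).
    destruct (l1 ++ l2) as [|g L0] eqn:HL0.
    + exists 0, []. split; [simpl in *; lia|]. intros x y.
      destruct (prod_lin_deriv_perm v _ _ P x y) as [_ ->]. simpl. rewrite E. ring.
    + destruct (IH (pred n) ltac:(simpl in *; lia) (g :: L0) (eq_sym Hl0) ltac:(discriminate))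
        as [K [L' [HL' EL']]].
      exists K, (f :: L'). split; [simpl in *; lia|].
      intros x y. destruct (prod_lin_deriv_perm v _ _ P x y) as [_ ->].
      rewrite prod_lin_deriv_cons, E, EL', (prod_lin_cons f L'). ring.
  - subst. apply prod_lin_deriv_factors_transverse; auto.
    intros f Hf E. apply Hno. eauto.
Qed.

Definition has_deriv (v : R * R) (f g : R -> R -> R) : Prop :=
  forall x y, derivable_pt_lim (fun t => f (x + t * fst v) (y + t * snd v)) 0 (g x y).

Lemma has_deriv_unique v f g1 g2 : has_deriv v f g1 -> has_deriv v f g2 -> forall x y, g1 x y = g2 x y.
Proof. intros H1 H2 x y. eapply uniqueness_limite; eauto. Qed.

Lemma derivable_affine A B z : derivable_pt_lim (fun t => A + t * B) z B.
Proof.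
  intros eps Heps. exists (mkposreal 1 Rlt_0_1). intros h Hh _.
  replace ((A + (z + h) * B - (A + z * B)) / h - B) with 0 by (field; auto).
  rewrite Rabs_R0. auto.
Qed.

Lemma linform_on_line a b x y v t :
  linform a b (x + t * fst v) (y + t * snd v) = linform a b x y + t * lin_at (a, b) v.
Proof. unfold linform, lin_at. simpl. ring. Qed.

Lemma has_deriv_prod_lin v L : has_deriv v (prod_lin L) (prod_lin_deriv v L).
Proof.
  intros x y. induction L as [|[a b] L IH]; [exact (derivable_pt_lim_const 1 0)|].
  assert (Hf : derivable_pt_lim (fun t => linform a b (x + t * fst v) (y + t * snd v)) 0 (lin_at (a, b) v)).
  { replace (fun t => linform a b (x + t * fst v) (y + t * snd v))
      with (fun t => linform a b x y + t * lin_at (a, b) v)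
      by (apply functional_extensionality; intro; rewrite linform_on_line; auto).
    apply derivable_affine. }
  pose proof (derivable_pt_lim_mult _ _ 0 _ _ Hf IH) as H. cbv beta in H.
  rewrite !Rmult_0_l, !Rplus_0_r in H. exact H.
Qed.

(* Derivative of a [d]-th power of a linear form in direction [v] picks up the
   factor [d * l(v)].  [deriv_factor d vs t] is the factor accumulated by the
   term [t] after deriving successively in the directions [vs]. *)
Definition term_at (t : R * R * R) (v : R * R) : R := term_al t * fst v + term_be t * snd v.

Fixpoint deriv_factor (d : nat) (vs : list (R * R)) (t : R * R * R) : R :=
  match vs with [] => 1 | v :: vs' => INR d * term_at t v * deriv_factor (pred d) vs' t end.

Lemma deriv_factor_coef d vs l l' a b : deriv_factor d vs (l, a, b) = deriv_factor d vs (l', a, b).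
Proof. revert d. induction vs as [|v vs IH]; intro d; simpl; [auto|]. rewrite IH. auto. Qed.

Definition derive_rep (d : nat) (vs : list (R * R)) (rep : list (R * R * R)) : list (R * R * R) :=
  map (fun t => (term_lam t * deriv_factor d vs t, term_al t, term_be t)) rep.

Lemma rep_eval_cons d t rep x y : rep_eval d (t :: rep) x y =
  term_lam t * (linform (term_al t) (term_be t) x y) ^ d + rep_eval d rep x y.
Proof. destruct t as [[l a] b]. reflexivity. Qed.

Lemma has_deriv_rep v d rep : has_deriv v (rep_eval d rep) (rep_eval (pred d) (derive_rep d [v] rep)).
Proof.
  intros x y. induction rep as [|[[l a] b] rep IH]; [exact (derivable_pt_lim_const 0 0)|].
  assert (Hp : derivable_pt_lim (fun s => (linform a b (x + s * fst v) (y + s * snd v)) ^ d) 0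
                 (INR d * (linform a b x y) ^ (pred d) * lin_at (a, b) v)).
  { replace (fun s => (linform a b (x + s * fst v) (y + s * snd v)) ^ d)
      with (comp (fun z => z ^ d) (fun s => linform a b x y + s * lin_at (a, b) v))
      by (apply functional_extensionality; intro; unfold comp; rewrite linform_on_line; auto).
    pose proof (derivable_pt_lim_comp _ (fun z => z ^ d) 0 _ _
      (derivable_affine (linform a b x y) (lin_at (a, b) v) 0)
      (derivable_pt_lim_pow (linform a b x y + 0 * lin_at (a, b) v) d)) as H.
    rewrite Rmult_0_l, Rplus_0_r in H. exact H. }
  pose proof (derivable_pt_lim_plus _ _ 0 _ _ (derivable_pt_lim_scal _ l 0 _ Hp) IH) as H.
  replace (rep_eval (pred d) (derive_rep d [v] ((l, a, b) :: rep)) x y) with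
    (l * (INR d * linform a b x y ^ pred d * lin_at (a, b) v) +
     rep_eval (pred d) (derive_rep d [v] rep) x y); [exact H|].
  unfold derive_rep. rewrite map_cons, rep_eval_cons. simpl. unfold term_at, lin_at. simpl. ring.
Qed.

Inductive iter_deriv : list (R * R) -> (R -> R -> R) -> (R -> R -> R) -> Prop :=
  | iter_deriv_nil f : iter_deriv [] f f
  | iter_deriv_cons v vs f g h : has_deriv v f g -> iter_deriv vs g h -> iter_deriv (v :: vs) f h.

Lemma iter_deriv_rep vs : forall d rep,
  iter_deriv vs (rep_eval d rep) (rep_eval (d - length vs) (derive_rep d vs rep)).
Proof.
  induction vs as [|v vs IH]; intros d rep.
  - replace (rep_eval (d - length []) (derive_rep d [] rep)) with (rep_eval d rep);
      [constructor|].
    apply functional_extensionality; intro x; apply functional_extensionality; intro y.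
    rewrite Nat.sub_0_r. induction rep as [|t rep IHrep]; [reflexivity|].
    unfold derive_rep in *. rewrite map_cons, !rep_eval_cons, IHrep. simpl. ring.
  - apply iter_deriv_cons with (rep_eval (pred d) (derive_rep d [v] rep)); [apply has_deriv_rep|].
    replace (rep_eval (d - length (v :: vs)) (derive_rep d (v :: vs) rep)) with
      (rep_eval (pred d - length vs) (derive_rep (pred d) vs (derive_rep d [v] rep))); [apply IH|].
    f_equal; [simpl; lia|]. unfold derive_rep. rewrite map_map. apply map_ext.
    intros [[l a] b]. simpl. rewrite (deriv_factor_coef _ _ _ l). f_equal. f_equal. ring.
Qed.

(** * Hyperbolic binary forms *)

Definition hyperbolic (n : nat) (f : R -> R -> R) : Prop :=
  exists K L, length L = n /\ forall x y, f x y = K * prod_lin L x y.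

Lemma hyperbolic_deriv n v f g : hyperbolic (S n) f -> has_deriv v f g -> hyperbolic n g.
Proof.
  intros [K [L [Hl E]]] Hd.
  assert (Hd' : has_deriv v f (fun x y => K * prod_lin_deriv v L x y)).
  { intros x y. replace (fun t => f (x + t * fst v) (y + t * snd v))
      with (fun t => K * prod_lin L (x + t * fst v) (y + t * snd v))
      by (apply functional_extensionality; intro; auto).
    apply derivable_pt_lim_scal, has_deriv_prod_lin. }
  destruct (prod_lin_deriv_factors v L) as [K' [L' [Hl' E']]]; [intro; subst; discriminate|].
  exists (K * K'), L'. split; [lia|]. intros x y.
  rewrite (has_deriv_unique _ _ _ _ Hd Hd'), E'. ring.
Qed.

Lemma hyperbolic_iter_deriv vs f h : iter_deriv vs f h ->
  forall n, hyperbolic n f -> (length vs <= n)%nat -> hyperbolic (n - length vs) h.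
Proof.
  induction 1 as [|v vs f g h Hd _ IH]; intros n Hh Hl; [rewrite Nat.sub_0_r; auto|].
  destruct n as [|n]; [simpl in Hl; lia|]. simpl.
  apply IH; [eapply hyperbolic_deriv; eauto|simpl in Hl; lia].
Qed.

Lemma hyperbolic_has_zero n f : hyperbolic n f -> (1 <= n)%nat ->
  exists x0 y0, (x0 <> 0 \/ y0 <> 0) /\ f x0 y0 = 0.
Proof.
  intros [K [L [Hl E]]] Hn. destruct L as [|[a b] L]; [simpl in Hl; lia|].
  destruct (Req_dec a 0) as [Ha|Ha]; [destruct (Req_dec b 0) as [Hb|Hb]|].
  - exists 1, 0. split; [left; lra|]. rewrite E, prod_lin_cons. simpl. unfold linform.
    rewrite Ha, Hb. ring.
  - exists b, (-a). split; [left; auto|]. rewrite E, prod_lin_cons. simpl. unfold linform. ring.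
  - exists b, (-a). split; [right; lra|]. rewrite E, prod_lin_cons. simpl. unfold linform. ring.
Qed.

Lemma derived_rep_has_zero d p rep vs : hyperbolic d p ->
  (forall x y, p x y = rep_eval d rep x y) -> (length vs < d)%nat ->
  exists x0 y0, (x0 <> 0 \/ y0 <> 0) /\ rep_eval (d - length vs) (derive_rep d vs rep) x0 y0 = 0.
Proof.
  intros [K [L [HL E]]] Hp Hl. apply (hyperbolic_has_zero (d - length vs)); [|lia].
  apply (hyperbolic_iter_deriv vs (rep_eval d rep)); [apply iter_deriv_rep| |lia].
  exists K, L. split; auto. intros; rewrite <- Hp; auto.
Qed.

(** * Honest representations and semidefinite sums of even powers *)

Definition det (t u : R * R * R) : R := term_al t * term_be u - term_al u * term_be t.

Definition independent (t u : R * R * R) : Prop := det t u <> 0.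

Definition kernel_dir (u : R * R * R) : R * R := (term_be u, - term_al u).

Lemma term_at_kernel_dir t u : term_at t (kernel_dir u) = det t u.
Proof. unfold term_at, kernel_dir, det. simpl. ring. Qed.

Lemma honest_pairs rep : honest rep -> ForallOrdPairs independent rep.
Proof.
  induction rep as [|t r IH]; intro H; constructor.
  - apply Forall_forall. intros u Hu. destruct (In_nth r u (0, 0, 0) Hu) as [j [Hj Ej]].
    specialize (H 0%nat (S j) ltac:(lia) ltac:(simpl; lia)). simpl in H. rewrite Ej in H. exact H.
  - apply IH. intros i j Hij Hj. apply (H (S i) (S j)); simpl; lia.
Qed.

Lemma pairs_filter f l : ForallOrdPairs independent l -> ForallOrdPairs independent (filter f l).
Proof.
  induction 1 as [|t r Ht _ IH]; simpl; [constructor|]. destruct (f t); [|auto].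
  constructor; auto. rewrite Forall_forall in Ht |- *. intros u Hu. apply filter_In in Hu. apply Ht, Hu.
Qed.

Lemma independent_distinct l t u : ForallOrdPairs independent l -> In t l -> In u l -> t <> u ->
  det t u <> 0.
Proof.
  intros H Ht Hu Htu. destruct (ForallOrdPairs_In H t u Ht Hu) as [E|[D|D]]; [contradiction|auto|].
  unfold independent, det in *. lra.
Qed.

Lemma independent_common_zero l x0 y0 : ForallOrdPairs independent l -> (x0 <> 0 \/ y0 <> 0) ->
  (forall t, In t l -> linform (term_al t) (term_be t) x0 y0 = 0) -> (length l <= 1)%nat.
Proof.
  intros Hl Hnz Hv. destruct l as [|t [|u r]]; simpl; try lia. exfalso.
  inversion Hl as [|? ? Ht _]; subst. inversion Ht as [|? ? Htu _]; subst. apply Htu.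
  pose proof (Hv t (or_introl eq_refl)) as A. pose proof (Hv u (or_intror (or_introl eq_refl))) as B.
  unfold linform, det in *.
  assert (E1 : x0 * (term_al t * term_be u - term_al u * term_be t) = 0).
  { replace (x0 * (term_al t * term_be u - term_al u * term_be t)) with
      (term_be u * (term_al t * x0 + term_be t * y0) - term_be t * (term_al u * x0 + term_be u * y0))
      by ring.
    rewrite A, B. ring. }
  assert (E2 : y0 * (term_al t * term_be u - term_al u * term_be t) = 0).
  { replace (y0 * (term_al t * term_be u - term_al u * term_be t)) with
      (term_al t * (term_al u * x0 + term_be u * y0) - term_al u * (term_al t * x0 + term_be t * y0))
      by ring.
    rewrite A, B. ring. }
  destruct Hnz as [Hx|Hy].
  - apply Rmult_integral in E1; destruct E1; [contradiction|auto].
  - apply Rmult_integral in E2; destruct E2; [contradiction|auto].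
Qed.

Lemma even_pow_nonneg z k : 0 <= z ^ (2 * k).
Proof. rewrite pow_mult. apply pow_le. nra. Qed.

Lemma rep_semidefinite k rep x y sg : (forall t, In t rep -> 0 <= sg * term_lam t) ->
  0 <= sg * rep_eval (2 * k) rep x y.
Proof.
  induction rep as [|t rep IH]; intro H; [simpl; lra|]. rewrite rep_eval_cons.
  pose proof (even_pow_nonneg (linform (term_al t) (term_be t) x y) k).
  assert (0 <= sg * term_lam t) by (apply H; left; auto).
  assert (0 <= sg * rep_eval (2 * k) rep x y) by (apply IH; intros; apply H; right; auto).
  replace (sg * (term_lam t * linform (term_al t) (term_be t) x y ^ (2 * k) + rep_eval (2 * k) rep x y))
    with ((sg * term_lam t) * linform (term_al t) (term_be t) x y ^ (2 * k) +
          sg * rep_eval (2 * k) rep x y) by ring.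
  pose proof (Rmult_le_pos _ _ H1 H0). lra.
Qed.

Lemma semidefinite_zero_forms k rep x y sg : (forall t, In t rep -> 0 <= sg * term_lam t) ->
  rep_eval (2 * k) rep x y = 0 ->
  forall t, In t rep -> sg * term_lam t <> 0 -> linform (term_al t) (term_be t) x y = 0.
Proof.
  induction rep as [|t0 rep IH]; intros H Z t Ht Hnz; [destruct Ht|].
  rewrite rep_eval_cons in Z.
  set (l0 := linform (term_al t0) (term_be t0) x y) in *.
  pose proof (even_pow_nonneg l0 k).
  assert (0 <= sg * term_lam t0) by (apply H; left; auto).
  assert (0 <= sg * rep_eval (2 * k) rep x y) by (apply rep_semidefinite; intros; apply H; right; auto).
  pose proof (Rmult_le_pos _ _ H1 H0).
  assert (Hsum : sg * term_lam t0 * l0 ^ (2 * k) + sg * rep_eval (2 * k) rep x y = 0)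
    by (replace 0 with (sg * 0) by ring; rewrite <- Z; ring).
  assert (Hsg : sg <> 0) by (intro E; apply Hnz; rewrite E; ring).
  destruct Ht as [<-|Ht].
  - assert (E : sg * term_lam t0 * l0 ^ (2 * k) = 0) by lra.
    apply Rmult_integral in E. destruct E as [E|E]; [contradiction|].
    destruct (Req_dec l0 0) as [?|Hn]; auto. exfalso. apply (pow_nonzero _ (2 * k) Hn). auto.
  - apply IH; auto; [intros; apply H; right; auto|].
    assert (E : sg * rep_eval (2 * k) rep x y = 0) by lra.
    apply Rmult_integral in E. destruct E; [contradiction|auto].
Qed.

(* Since the derivative is
   hyperbolic it has a nontrivial zero, so at most one term survives. *)
Lemma derived_survivors d k p rep vs sg Q : hyperbolic d p ->
  (forall x y, p x y = rep_eval d rep x y) -> (length vs < d)%nat -> (d - length vs = 2 * k)%nat ->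
  (forall t, In t rep -> 0 <= sg * (term_lam t * deriv_factor d vs t)) ->
  ForallOrdPairs independent Q ->
  (forall t, In t Q -> In t rep /\ sg * (term_lam t * deriv_factor d vs t) <> 0) ->
  (length Q <= 1)%nat.
Proof.
  intros Hh Hp Hl Hk Hsg HQ Hsurv.
  destruct (derived_rep_has_zero d p rep vs Hh Hp Hl) as [x0 [y0 [Hnz Z]]]. rewrite Hk in Z.
  apply (independent_common_zero Q x0 y0 HQ Hnz). intros t Ht.
  destruct (Hsurv t Ht) as [Htr Hne].
  assert (Hin : In (term_lam t * deriv_factor d vs t, term_al t, term_be t) (derive_rep d vs rep))
    by (apply in_map_iff; exists t; auto).
  refine (semidefinite_zero_forms k _ x0 y0 sg _ Z _ Hin Hne).
  intros t' Ht'. apply in_map_iff in Ht'. destruct Ht' as [t0 [<- Ht0]]. apply Hsg, Ht0.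
Qed.

Definition pos_terms (rep : list (R * R * R)) := filter is_posb rep.
Definition neg_terms (rep : list (R * R * R)) := filter is_negb rep.

Lemma in_pos_terms t rep : In t (pos_terms rep) <-> In t rep /\ 0 < term_lam t.
Proof.
  unfold pos_terms, is_posb. rewrite filter_In.
  destruct (Rlt_dec 0 (term_lam t)); intuition discriminate.
Qed.

Lemma in_neg_terms t rep : In t (neg_terms rep) <-> In t rep /\ term_lam t < 0.
Proof.
  unfold neg_terms, is_negb. rewrite filter_In.
  destruct (Rlt_dec (term_lam t) 0); intuition discriminate.
Qed.

Lemma length_sign_split rep : (forall t, In t rep -> term_lam t <> 0) ->
  length rep = (length (pos_terms rep) + length (neg_terms rep))%nat.
Proof.
  induction rep as [|t rep IH]; intro H; [reflexivity|].
  unfold pos_terms, neg_terms, is_posb, is_negb in *. simpl.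
  assert (term_lam t <> 0) by (apply H; left; auto).
  rewrite IH by (intros; apply H; right; auto).
  destruct (Rlt_dec 0 (term_lam t)), (Rlt_dec (term_lam t) 0); simpl; lra || lia.
Qed.

Definition neg_rep (rep : list (R * R * R)) : list (R * R * R) :=
  map (fun t => (- term_lam t, term_al t, term_be t)) rep.

Lemma rep_eval_neg_rep d rep x y : rep_eval d (neg_rep rep) x y = - rep_eval d rep x y.
Proof.
  induction rep as [|t rep IH]; [simpl; ring|].
  unfold neg_rep in *. rewrite map_cons, !rep_eval_cons, IH. simpl. ring.
Qed.

Lemma neg_rep_nonzero rep : (forall t, In t rep -> term_lam t <> 0) ->
  forall t, In t (neg_rep rep) -> term_lam t <> 0.
Proof.
  intros Hnz t Ht. apply in_map_iff in Ht. destruct Ht as [t0 [<- Ht0]]. simpl.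
  pose proof (Hnz t0 Ht0). lra.
Qed.

Lemma hyperbolic_opp n f : hyperbolic n f -> hyperbolic n (fun x y => - f x y).
Proof. intros [K [L [HL E]]]. exists (- K), L. split; auto. intros; rewrite E; ring. Qed.

Lemma neg_rep_pairs rep : ForallOrdPairs independent rep -> ForallOrdPairs independent (neg_rep rep).
Proof.
  induction 1 as [|t r Ht _ IH]; constructor; auto. apply Forall_map.
  eapply Forall_impl; [|exact Ht]. auto.
Qed.

Lemma neg_rep_sign_classes rep :
  length (pos_terms (neg_rep rep)) = length (neg_terms rep) /\
  length (neg_terms (neg_rep rep)) = length (pos_terms rep).
Proof.
  induction rep as [|t rep [IH1 IH2]]; [auto|].
  unfold pos_terms, neg_terms, neg_rep, is_posb, is_negb in *. simpl.
  destruct (Rlt_dec 0 (- term_lam t)), (Rlt_dec (term_lam t) 0),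
    (Rlt_dec (- term_lam t) 0), (Rlt_dec 0 (term_lam t)); simpl; split; lia || lra.
Qed.

Fixpoint kernel_dirs2 (P : list (R * R * R)) : list (R * R) :=
  match P with [] => [] | u :: P' => kernel_dir u :: kernel_dir u :: kernel_dirs2 P' end.

Lemma kernel_dirs2_length P : length (kernel_dirs2 P) = (2 * length P)%nat.
Proof. induction P; simpl; lia. Qed.

Lemma deriv_factor_kernel_zero d P t : In t P -> deriv_factor d (kernel_dirs2 P) t = 0.
Proof.
  revert d. induction P as [|u P IH]; intros d H; [destruct H|]. simpl.
  destruct H as [<-|H].
  - rewrite term_at_kernel_dir. unfold det. ring.
  - rewrite IH; auto. ring.
Qed.

Lemma deriv_factor_kernel_pos d P t : (2 * length P < d)%nat -> (forall u, In u P -> det t u <> 0) ->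
  0 < deriv_factor d (kernel_dirs2 P) t.
Proof.
  revert d. induction P as [|u P IH]; intros d Hl H; simpl; [lra|].
  rewrite term_at_kernel_dir.
  assert (Hd : det t u <> 0) by (apply H; left; auto).
  assert (0 < INR d) by (apply lt_0_INR; simpl in Hl; lia).
  assert (0 < INR (pred d)) by (apply lt_0_INR; simpl in Hl; lia).
  assert (0 < deriv_factor (pred (pred d)) (kernel_dirs2 P) t)
    by (apply IH; [simpl in Hl; lia|intros; apply H; right; auto]).
  assert (0 < det t u * det t u) by (apply Rsqr_pos_lt in Hd; auto).
  replace (INR d * det t u * (INR (pred d) * det t u * deriv_factor (pred (pred d)) (kernel_dirs2 P) t))
    with ((INR d * INR (pred d)) * (det t u * det t u) * deriv_factor (pred (pred d)) (kernel_dirs2 P) t)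
    by ring.
  apply Rmult_lt_0_compat; [apply Rmult_lt_0_compat|]; auto.
  apply Rmult_lt_0_compat; auto.
Qed.

(* Deriving along [kernel m + kernel l] and then [kernel m - kernel l]
   multiplies the term [l] by [d(d-1) det(l,m)^2] and the term [m] by its
   opposite. *)
Definition mixed_dirs (l m : R * R * R) : list (R * R) :=
  [(fst (kernel_dir m) + fst (kernel_dir l), snd (kernel_dir m) + snd (kernel_dir l));
   (fst (kernel_dir m) - fst (kernel_dir l), snd (kernel_dir m) - snd (kernel_dir l))].

Lemma mixed_dirs_factor_left d l m :
  deriv_factor d (mixed_dirs l m) l = INR d * INR (pred d) * (det l m * det l m).
Proof. unfold mixed_dirs, kernel_dir, det. simpl. unfold term_at. simpl. ring. Qed.

Lemma mixed_dirs_factor_right d l m :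
  deriv_factor d (mixed_dirs l m) m = - (INR d * INR (pred d) * (det l m * det l m)).
Proof. unfold mixed_dirs, kernel_dir, det. simpl. unfold term_at. simpl. ring. Qed.

Section SignClasses.
Variables (s : nat) (p : R -> R -> R) (rep : list (R * R * R)).
Hypothesis p_hyperbolic : hyperbolic (2 * s) p.
Hypothesis p_rep : forall x y, p x y = rep_eval (2 * s) rep x y.
Hypothesis rep_nonzero : forall t, In t rep -> term_lam t <> 0.
Hypothesis rep_honest : ForallOrdPairs independent rep.

(* Terms of opposite signs are distinct, hence independent. *)
Lemma opposite_signs_independent t u : In t (pos_terms rep) -> In u (neg_terms rep) -> det t u <> 0.
Proof.
  intros Ht Hu. apply in_pos_terms in Ht. apply in_neg_terms in Hu.
  apply (independent_distinct rep); try tauto. intros ->. lra.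
Qed.

(* Fewer than [s] positive terms leave at most one negative term: deriving twice
   along the kernel of each positive term leaves a negative semidefinite form. *)
Lemma few_positive_terms : (length (pos_terms rep) < s)%nat -> (length (neg_terms rep) <= 1)%nat.
Proof.
  intros Ha. set (vs := kernel_dirs2 (pos_terms rep)).
  assert (Hvs : length vs = (2 * length (pos_terms rep))%nat) by apply kernel_dirs2_length.
  assert (Hneg : forall t, In t (neg_terms rep) -> 0 < - (term_lam t * deriv_factor (2 * s) vs t)).
  { intros t Ht. pose proof (proj2 (proj1 (in_neg_terms t rep) Ht)).
    assert (0 < deriv_factor (2 * s) vs t); [|nra].
    apply deriv_factor_kernel_pos; [lia|]. intros u Hu. intro E.
    apply (opposite_signs_independent u t Hu Ht). unfold det in *. lra. }
  apply (derived_survivors (2 * s) (s - length (pos_terms rep)) p rep vs (-1)); auto; try lia.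
  - intros t Ht. destruct (Rlt_dec 0 (term_lam t)) as [Hpos|Hnpos].
    + unfold vs. rewrite deriv_factor_kernel_zero by (apply in_pos_terms; auto). lra.
    + assert (In t (neg_terms rep)) by (apply in_neg_terms; split; auto;
        pose proof (rep_nonzero t Ht); lra).
      pose proof (Hneg t H). lra.
  - apply pairs_filter, rep_honest.
  - intros t Ht. split; [apply in_neg_terms in Ht; tauto|]. pose proof (Hneg t Ht). lra.
Qed.

(* In degree at least 4, a representation with at most one term of each sign
   has at most one term: if it consisted of a positive [l] and a negative [m],
   deriving along [mixed_dirs l m] would make both coefficients positive. *)
Lemma one_term_each_sign : (2 <= s)%nat ->
  (length (pos_terms rep) <= 1)%nat -> (length (neg_terms rep) <= 1)%nat -> (length rep <= 1)%nat.
Proof.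
  intros Hs Ha Hb. rewrite (length_sign_split rep rep_nonzero).
  destruct (pos_terms rep) as [|l [|]] eqn:El; [simpl in *; lia| |simpl in Ha; lia].
  destruct (neg_terms rep) as [|m [|]] eqn:Em; [simpl in *; lia| |simpl in Hb; lia].
  exfalso.
  assert (Hl : In l rep /\ 0 < term_lam l) by (apply in_pos_terms; rewrite El; left; auto).
  assert (Hm : In m rep /\ term_lam m < 0) by (apply in_neg_terms; rewrite Em; left; auto).
  assert (Dlm : det l m <> 0) by (apply opposite_signs_independent; [rewrite El|rewrite Em]; left; auto).
  assert (Hrep : forall t, In t rep -> t = l \/ t = m).
  { intros t Ht. destruct (Rlt_dec 0 (term_lam t)).
    - assert (In t (pos_terms rep)) as H by (apply in_pos_terms; auto). rewrite El in H.
      destruct H as [<-|[]]; auto.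
    - assert (In t (neg_terms rep)) as H by (apply in_neg_terms; split; auto;
        pose proof (rep_nonzero t Ht); lra).
      rewrite Em in H. destruct H as [<-|[]]; auto. }
  assert (Hcoef : forall t, In t rep -> 0 < term_lam t * deriv_factor (2 * s) (mixed_dirs l m) t).
  { assert (Hd : 0 < INR (2 * s) * INR (pred (2 * s)) * (det l m * det l m)).
    { apply Rmult_lt_0_compat; [apply Rmult_lt_0_compat; apply lt_0_INR; lia|].
      apply Rsqr_pos_lt in Dlm; auto. }
    intros t Ht. destruct (Hrep t Ht) as [->| ->].
    - rewrite mixed_dirs_factor_left. apply Rmult_lt_0_compat; [tauto|auto].
    - rewrite mixed_dirs_factor_right. destruct Hm as [_ Hm]. nra. }
  assert (Hlen : (2 <= length rep)%nat).
  { rewrite (length_sign_split rep rep_nonzero), El, Em. simpl. lia. }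
  assert ((length rep <= 1)%nat); [|lia].
  apply (derived_survivors (2 * s) (s - 1) p rep (mixed_dirs l m) 1); auto; try (simpl; lia).
  - intros t Ht. pose proof (Hcoef t Ht). lra.
  - intros t Ht. split; auto. pose proof (Hcoef t Ht). lra.
Qed.

End SignClasses.

Lemma positive_terms_lower_bound s p rep : (1 <= s)%nat -> hyperbolic (2 * s) p ->
  (forall x y, p x y = rep_eval (2 * s) rep x y) -> (forall t, In t rep -> term_lam t <> 0) ->
  ForallOrdPairs independent rep -> (2 <= length rep)%nat -> (s <= length (pos_terms rep))%nat.
Proof.
  intros Hs Hh Hp Hnz Hhon H2.
  destruct (le_lt_dec s (length (pos_terms rep))) as [|Ha]; [auto|exfalso].
  pose proof (few_positive_terms s p rep Hh Hp Hnz Hhon Ha) as Hb.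
  pose proof (length_sign_split rep Hnz) as Hsplit.
  destruct (Nat.eq_dec s 1) as [->|Hs2]; [lia|].
  assert (Ha' : (length (pos_terms rep) <= 1)%nat).
  { destruct (neg_rep_sign_classes rep) as [E1 E2]. rewrite <- E2.
    apply (few_positive_terms s (fun x y => - p x y) (neg_rep rep)).
    - apply hyperbolic_opp, Hh.
    - intros x y. rewrite rep_eval_neg_rep, Hp. auto.
    - apply neg_rep_nonzero, Hnz.
    - apply neg_rep_pairs, Hhon.
    - lia. }
  pose proof (one_term_each_sign s p rep Hh Hp Hnz Hhon ltac:(lia) Ha' Hb). lia.
Qed.

Lemma rpower_root_pow c n : 0 < c -> (0 < n)%nat -> (Rpower c (/ INR n)) ^ n = c.
Proof.
  intros Hc Hn. rewrite <- Rpower_pow by (unfold Rpower; apply exp_pos).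
  rewrite Rpower_mult, Rinv_l by (apply not_0_INR; lia). apply Rpower_1; auto.
Qed.

(* A form of degree [2s] represented with at most one term is [0] or
   [+-(linear form)^(2s)]; so a form that is not such a power needs two terms. *)
Lemma rep_length_ge2 s p rep : (1 <= s)%nat ->
  (forall alpha beta : R,
      ~ (forall x y, p x y = (linform alpha beta x y) ^ (2 * s)) /\
      ~ (forall x y, p x y = - (linform alpha beta x y) ^ (2 * s))) ->
  is_rep (2 * s) p rep -> (2 <= length rep)%nat.
Proof.
  intros Hs Hnp [Hl Hp].
  destruct rep as [|[[l al] be] [|t2 r]]; simpl; try lia; exfalso.
  - apply (proj1 (Hnp 0 0)). intros x y. rewrite Hp. simpl. unfold linform.
    replace (0 * x + 0 * y) with 0 by ring. rewrite pow_i by lia. auto.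
  - assert (Hl0 : l <> 0) by (apply (Hl (l, al, be)); left; auto).
    assert (Hpow : forall c, 0 < c -> forall x y,
      c * linform al be x y ^ (2 * s) =
      linform (Rpower c (/ INR (2 * s)) * al) (Rpower c (/ INR (2 * s)) * be) x y ^ (2 * s)).
    { intros c Hc x y. unfold linform.
      replace (Rpower c (/ INR (2 * s)) * al * x + Rpower c (/ INR (2 * s)) * be * y)
        with (Rpower c (/ INR (2 * s)) * (al * x + be * y)) by ring.
      rewrite Rpow_mult_distr, rpower_root_pow by (auto; lia). auto. }
    destruct (Rtotal_order l 0) as [Hneg|[|Hpos]]; [|contradiction|].
    + eapply (proj2 (Hnp _ _)). intros x y. rewrite Hp. cbn [rep_eval fold_right].
      rewrite <- (Hpow (- l)) by lra. ring.
    + eapply (proj1 (Hnp _ _)). intros x y. rewrite Hp. cbn [rep_eval fold_right].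
      rewrite <- (Hpow l) by lra. ring.
Qed.

Theorem corollary2p6 (s : nat) (p : R -> R -> R) :
  (1 <= s)%nat ->
  is_prod_of_linforms (2 * s) p ->
  (forall alpha beta : R,
      ~ (forall x y, p x y = (linform alpha beta x y) ^ (2 * s)) /\
      ~ (forall x y, p x y = - (linform alpha beta x y) ^ (2 * s))) ->
  forall a b : nat, badges (2 * s) p (a, b) -> (s <= a)%nat /\ (s <= b)%nat.
Proof.
  intros Hs [L [HL EL]] Hnp a b [rep [Hrep [Hhon Hb]]].
  injection Hb as <- <-.
  assert (Hh : hyperbolic (2 * s) p) by (exists 1, L; split; auto; intros; rewrite EL; ring).
  pose proof (rep_length_ge2 s p rep Hs Hnp Hrep) as H2.
  destruct Hrep as [Hnz Hp]. apply honest_pairs in Hhon.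
  split.
  - exact (positive_terms_lower_bound s p rep Hs Hh Hp Hnz Hhon H2).
  - (* the negative terms of [rep] are the positive terms of [neg_rep rep], representing [-p] *)
    change (s <= length (neg_terms rep))%nat. rewrite <- (proj1 (neg_rep_sign_classes rep)).
    apply (positive_terms_lower_bound s (fun x y => - p x y)); auto.
    + apply hyperbolic_opp, Hh.
    + intros x y. rewrite rep_eval_neg_rep, Hp. auto.
    + apply neg_rep_nonzero, Hnz.
    + apply neg_rep_pairs, Hhon.
    + unfold neg_rep. rewrite length_map. auto.
Qed.
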